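(* Any quantum algorithm that solves the metric estimation problem on $n$ points with an approximation factor smaller than $3$ needs to make at least $\Omega(n^2)$ oracle calls.
   Context: Metric estimation: input is a metric space $\langle \mathcal{M},d\rangle$ with $\mathcal{M}=\{p_1,\dots,p_n\}$, accessible only via an oracle that on input $(i,j)$ returns $d(p_i,p_j)$. The output, with approximation factor $\alpha>1$, is an $n\times n$ matrix $A$ with $d(p_i,p_j)\le A[i][j]\le \alpha\, d(p_i,p_j)$ for all $1\le i,j\le n$. The complexity measure is the number of (quantum) oracle queries. *)

From HB Require Import structures.
From mathcomp Require Import all_boot all_order all_algebra.
From mathcomp Require Import spectral.
From mathcomp Require Import Rstruct.
From mathcomp Require Import complex.
From Stdlib Require Rdefinitions.
Notation R := Rdefinitions.R.

Set Implicit Arguments.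
Unset Strict Implicit.
Unset Printing Implicit Defensive.

Import Order.TTheory GRing.Theory Num.Theory.
Local Open Scope ring_scope.

Definition Cx : numClosedFieldType := (Rdefinitions.R)[i].

Definition is_metric (n : nat) (d : 'I_n -> 'I_n -> R) : Prop :=
  [/\ forall i j, 0 <= d i j,
      forall i j, d i j = 0 <-> i = j,
      forall i j, d i j = d j i
    & forall i j k, d i k <= d i j + d j k].

Definition estimates (n : nat) (alpha : R) (d : 'I_n -> 'I_n -> R)
    (A : 'M[R]_n) : bool :=
  [forall i, forall j, (d i j <= A i j) && (A i j <= alpha * d i j)].

(* Computational basis of the algorithm's register:
   query register (i, j), answer register in Z_(K+1), workspace W. *)
Definition qspace (n K : nat) (W : finType) : finType :=
  ('I_n * 'I_n * 'I_K.+1 * W)%type.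

Definition qdim (n K : nat) (W : finType) : nat := #|qspace n K W|.

(* A T-query quantum algorithm: unitaries U_0, ..., U_T interleaved with T
   oracle calls, a fixed initial basis state, and a classical output map
   applied to the outcome of the final computational-basis measurement. *)
Record qalg (n K : nat) (W : finType) (T : nat) := QAlg {
  qa_U : 'I_T.+1 -> 'M[Cx]_(qdim n K W);
  qa_unitary : forall t, qa_U t \is unitarymx;
  qa_init : qspace n K W;
  qa_out : qspace n K W -> 'M[R]_n }.

(* The (standard, XOR-type) query oracle for input x, where x i j encodes
   the answer d(p_i, p_j):  |i, j, v, w>  |->  |i, j, v + x i j, w>. *)
Definition oracle_shift (n K : nat) (W : finType)
    (x : 'I_n -> 'I_n -> 'I_K.+1) (s : qspace n K W) : qspace n K W :=
  let: (i, j, v, w) := s in (i, j, (v + x i j), w).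

Definition oracle_mx (n K : nat) (W : finType)
    (x : 'I_n -> 'I_n -> 'I_K.+1) : 'M[Cx]_(qdim n K W) :=
  \matrix_(a, b) ((enum_val a == oracle_shift x (enum_val b))%:R).

Definition basis_vec (n K : nat) (W : finType) (s : qspace n K W)
    : 'cV[Cx]_(qdim n K W) :=
  \col_a ((enum_val a == s)%:R).

Fixpoint qstate (n K : nat) (W : finType) (T : nat) (Q : qalg n K W T)
    (x : 'I_n -> 'I_n -> 'I_K.+1) (t : nat) : 'cV[Cx]_(qdim n K W) :=
  match t with
  | 0 => qa_U Q ord0 *m basis_vec (qa_init Q)
  | t'.+1 => qa_U Q (inord t'.+1) *m (@oracle_mx n K W x *m qstate Q x t')
  end.

Definition final_state (n K : nat) (W : finType) (T : nat) (Q : qalg n K W T)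
    (x : 'I_n -> 'I_n -> 'I_K.+1) : 'cV[Cx]_(qdim n K W) :=
  qstate Q x T.

Definition success_prob (n K : nat) (W : finType) (T : nat) (Q : qalg n K W T)
    (alpha : R) (val : 'I_K.+1 -> R) (x : 'I_n -> 'I_n -> 'I_K.+1) : Cx :=
  \sum_(s : qspace n K W |
          estimates alpha (fun i j => val (x i j)) (qa_out Q s))
     `|final_state Q x (enum_rank s) ord0| ^+ 2.

Definition solves_metric_estimation (n K : nat) (W : finType) (T : nat)
    (Q : qalg n K W T) (alpha : R) (val : 'I_K.+1 -> R) : Prop :=
  forall x : 'I_n -> 'I_n -> 'I_K.+1,
    is_metric (fun i j => val (x i j)) ->
    2%:R / 3%:R <= success_prob Q alpha val x.

From HB Require Import structures.
From mathcomp Require Import all_boot all_order all_algebra.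
From mathcomp Require Import spectral Rstruct complex sesquilinear.
From mathcomp Require Import zify.
From mathcomp.algebra_tactics Require Import lra.
Import Order.TTheory GRing.Theory Num.Theory.

(* Restrict to the 2^(m^2) metrics d_B, m = n/2, indexed by the sets B of
   pairs (a, m + b) joining the two halves of the first 2m points: d_B is 3 on
   the pairs of B, 1 on the other pairs across the halves and 2 inside a half.
   Since alpha < 3, an alpha-estimate of d_B determines B, so the final states
   of an algorithm succeeding on all d_B put mass 2/3 on pairwise disjoint sets
   of outcomes; this forces the matrix of these states to have rank at least
   (2/3) 2^(m^2).  On the other hand the oracle of d_B is O_0 + sum_(e in B) D_e,
   so after t queries each amplitude, as a function of B, is a linear
   combination of the indicators [S \subset B] with #|S| <= t.  The rank is thus
   at most sum_(k <= t) 'C(m^2, k), which is below (2/3) 2^(m^2) unless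
   t >= m^2 / 4. *)

Lemma exp_162_lt_256 N : (4 <= N)%N -> (3 ^ 4 * (2 ^ N * 81 ^ N) < 2 ^ 4 * 256 ^ N)%N.
Proof.
elim: N => [//|N IH]; rewrite leq_eqVlt => /orP[/eqP <-|]; first by lia.
rewrite ltnS => /IH {}IH.
have -> : (3 ^ 4 * (2 ^ N.+1 * 81 ^ N.+1) = 162 * (3 ^ 4 * (2 ^ N * 81 ^ N)))%N.
  by rewrite !expnS; lia.
have -> : (2 ^ 4 * 256 ^ N.+1 = 256 * (2 ^ 4 * 256 ^ N))%N.
  by rewrite !expnS; lia.
apply: (@leq_trans (162 * (2 ^ 4 * 256 ^ N))); first by rewrite ltn_pmul2l.
by rewrite leq_mul2r orbT.
Qed.

Lemma sum_binomial_le_exp3 N T : (T <= N)%N ->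
  (2 ^ N * \sum_(k < T.+1) 'C(N, k) <= 2 ^ T * 3 ^ N)%N.
Proof.
move=> leTN; rewrite -[3]/(2 + 1) expnDn !big_distrr /=.
rewrite (big_ord_widen N.+1 (fun k => 2 ^ N * 'C(N, k))) //.
rewrite [X in (_ <= X)%N](bigID (fun k : 'I_N.+1 => (k < T.+1)%N)) /=.
apply: leq_trans (leq_addr _ _); apply: leq_sum => k ltkT.
rewrite exp1n muln1 [2 ^ N * _]mulnC [2 ^ T * _]mulnCA leq_mul2l -expnD.
by rewrite leq_exp2l //; have := ltn_ord k; lia.
Qed.

Lemma three_sum_binomial_lt N T : (4 <= N)%N -> (4 * T < N)%N ->
  (3 * \sum_(k < T.+1) 'C(N, k) < 2 * 2 ^ N)%N.
Proof.
move=> geN4 ltTN.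
have le_sum : (2 ^ N * \sum_(k < T.+1) 'C(N, k) <= 2 ^ T * 3 ^ N)%N.
  by apply: sum_binomial_le_exp3; lia.
rewrite -(ltn_pmul2l (expn_gt0 2 N)) mulnCA [X in (_ < X)%N]mulnCA.
apply: (@leq_ltn_trans (3 * (2 ^ T * 3 ^ N))); first by rewrite leq_mul2l le_sum orbT.
rewrite -(ltn_exp2r _ _ (_ : 0 < 4)%N) // !expnMn -!expnM.
apply: (@leq_ltn_trans (3 ^ 4 * (2 ^ N * 3 ^ (N * 4)))).
  by rewrite leq_mul2l leq_mul2r leq_exp2l ?orbT //; lia.
have -> : (3 ^ (N * 4) = 81 ^ N)%N by rewrite mulnC expnM.
have -> : (2 ^ (N * 4) * 2 ^ (N * 4) = 256 ^ N)%N by rewrite mulnC expnM -expnMn.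
exact: exp_162_lt_256.
Qed.

Local Open Scope ring_scope.
Local Open Scope sesquilinear_scope.

Lemma sum_disjoint_le {F : numDomainType} {I J : finType} {P : I -> pred J} {c : J -> F} :
  (forall s, 0 <= c s) -> (forall i i' s, P i s -> P i' s -> i = i') ->
  \sum_i \sum_(s | P i s) c s <= \sum_s c s.
Proof.
move=> c_ge0 P_disj; rewrite (exchange_big_dep predT) //=; apply: ler_sum => s _.
have [i0 Pi0s|noP] := pickP (P^~ s); last by rewrite big_pred0.
rewrite (bigD1 i0) //= big1 ?addr0 // => i /andP[Pis]; apply: contraNeq => _.
by rewrite (P_disj _ _ _ Pis Pi0s).
Qed.

Section MassRank.
Variable C : numClosedFieldType.

Lemma normC_sum_mul_le {r} (a b : 'I_r -> C) :
  `|\sum_k a k * b k| ^+ 2 <= (\sum_k `|a k| ^+ 2) * (\sum_k `|b k| ^+ 2).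
Proof.
pose u : 'rV[C]_r := \row_k a k; pose v : 'rV[C]_r := \row_k (b k)^*.
have dotE w w' : dotmx w w' = \sum_k w 0 k * (w' 0 k)^*.
  by rewrite dotmxE !mxE; apply: eq_bigr => k _; rewrite !mxE.
have : `|dotmx u v| ^+ 2 <= dotmx u u * dotmx v v.
  by case: (CauchySchwarz (@dotmx C r) u v).
rewrite !dotE.
congr (`|_| ^+ 2 <= _ * _); apply: eq_bigr => k _; rewrite !mxE ?conjCK ?normCK //.
by rewrite mulrC.
Qed.

Lemma mulmx_adj_diag m n (A : 'M[C]_(m, n)) i :
  (A *m A ^t*) i i = \sum_s `|A i s| ^+ 2.
Proof. by rewrite mxE; apply: eq_bigr => s _; rewrite !mxE normCK. Qed.

Lemma row_sqnorm_mulmx_unitary {m r n} (W : 'M[C]_(m, r)) (L : 'M[C]_(r, n)) i :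
  L \is unitarymx -> \sum_s `|(W *m L) i s| ^+ 2 = \sum_k `|W i k| ^+ 2.
Proof.
move=> /unitarymxP L_unitary; rewrite -!mulmx_adj_diag trmx_mul map_mxM.
by rewrite mulmxA -(mulmxA W) L_unitary mulmx1.
Qed.

Lemma sqnorm_unitarymx r n (L : 'M[C]_(r, n)) :
  L \is unitarymx -> \sum_k \sum_s `|L k s| ^+ 2 = r%:R.
Proof.
move=> /unitarymxP L_unitary.
transitivity (\sum_(k < r) (1 : C)); last by rewrite sumr_const card_ord.
by apply: eq_bigr => k _; rewrite -mulmx_adj_diag L_unitary mxE eqxx.
Qed.

(* A matrix of rank r factors through r orthonormal rows L; by Cauchy-Schwarz
   the mass of column s in any unit row is at most the weight of column s in L,
   and these weights add up to r. *)
Lemma disjoint_mass_le_rank m n (Phi : 'M[C]_(m, n)) (P : 'I_m -> pred 'I_n) :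
  (forall i i' s, P i s -> P i' s -> i = i') ->
  (forall i, \sum_s `|Phi i s| ^+ 2 <= 1) ->
  \sum_i \sum_(s | P i s) `|Phi i s| ^+ 2 <= (\rank Phi)%:R.
Proof.
move=> P_disj Phi_unit.
set L := schmidt (row_base Phi).
have L_unitary : L \is unitarymx by apply/schmidt_unitarymx/rank_leq_col.
have /submxP[W Phi_eq] : (Phi <= L)%MS.
  by apply: submx_trans (schmidt_sub _); rewrite eq_row_base.
pose c s := \sum_k `|L k s| ^+ 2.
have c_ge0 s : 0 <= c s by apply: sumr_ge0 => k _; rewrite exprn_ge0.
have mass_le_weight i s : `|Phi i s| ^+ 2 <= c s.
  rewrite Phi_eq mxE; apply: le_trans (normC_sum_mul_le (W i) (L^~ s)) _.
  rewrite -(row_sqnorm_mulmx_unitary W L i L_unitary) -Phi_eq.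
  by apply: ler_piMl; rewrite ?Phi_unit ?sumr_ge0 // => k _; rewrite exprn_ge0.
have <- : \sum_s c s = (\rank Phi)%:R by rewrite /c exchange_big sqnorm_unitarymx.
apply: le_trans _ (sum_disjoint_le c_ge0 P_disj).
by apply: ler_sum => i _; apply: ler_sum => s _.
Qed.

End MassRank.

Arguments disjoint_mass_le_rank {C m n Phi P}.

Lemma card_sets (X : finType) : #|{set X}| = (2 ^ #|X|)%N.
Proof. by rewrite -cardsT -card_powerset; apply: eq_card => S; rewrite powersetE subsetT. Qed.

Definition small_sets (X : finType) t := [set S : {set X} | (#|S| <= t)%N].

Lemma card_small_sets (X : finType) t :
  #|small_sets X t| = (\sum_(k < t.+1) 'C(#|X|, k))%N.
Proof.
under eq_bigr do rewrite -card_draws.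
elim: t => [|t IH]; first by rewrite big_ord1; apply: eq_card => S; rewrite !inE leqn0.
rewrite big_ord_recr /= -IH -(cardsID (small_sets X t) (small_sets X t.+1)); congr (_ + _).
  by apply: eq_card => S; rewrite !inE andb_idl // => /leqW.
by apply: eq_card => S; rewrite !inE -ltnNge andbC eqn_leq.
Qed.

Section QueryStateRank.
Variables (F : fieldType) (X : finType).
Local Notation NB := #|{set X}|.

Definition upset_row (S : {set X}) : 'rV[F]_NB := \row_(j < NB) (S \subset enum_val j)%:R.

Definition upset_mx t : 'M[F]_(#|small_sets X t|, NB) :=
  \matrix_(k < #|small_sets X t|) upset_row (enum_val k).

Definition member_diag (e : X) : 'M[F]_NB := diag_mx (\row_(j < NB) (e \in enum_val j)%:R).

Lemma upset_row_sub t (S : {set X}) : (#|S| <= t)%N -> (upset_row S <= upset_mx t)%MS.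
Proof.
move=> leSt; have St : S \in small_sets X t by rewrite inE.
apply/submxP; exists (delta_mx 0 (enum_rank_in St S)).
by rewrite -rowE rowK enum_rankK_in.
Qed.

Lemma upset_mx_sub t : (upset_mx t <= upset_mx t.+1)%MS.
Proof.
apply/row_subP => k; rewrite rowK; apply/upset_row_sub/leqW.
by have := enum_valP k; rewrite inE.
Qed.

Lemma upset_row_mul_member e S : upset_row S *m member_diag e = upset_row (e |: S).
Proof.
apply/rowP => j; rewrite mul_mx_diag !mxE subUset sub1set.
by case: (e \in _); case: (S \subset _); rewrite ?mulr1 ?mulr0.
Qed.

Lemma upset_mx_mul_member t e : (upset_mx t *m member_diag e <= upset_mx t.+1)%MS.
Proof.
apply/row_subP => k; rewrite row_mul rowK upset_row_mul_member.
apply: upset_row_sub; rewrite cardsU1; have := enum_valP k; rewrite inE.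
by case: (_ \notin _) => /= leSt; lia.
Qed.

Variables (D : nat) (O : 'M[F]_D) (Del : X -> 'M[F]_D) (U : nat -> 'M[F]_D).
Variables (v : 'cV[F]_D) (psi : {set X} -> nat -> 'cV[F]_D).
Hypothesis psi0 : forall B, psi B 0 = v.
Hypothesis psiS : forall B t,
  psi B t.+1 = U t.+1 *m ((O + \sum_(e in B) Del e) *m psi B t).

Definition states_mx t : 'M[F]_(D, NB) := \matrix_(a, j) psi (enum_val j) t a 0.

Lemma states_mxS t : states_mx t.+1 =
  U t.+1 *m (O *m states_mx t + \sum_e Del e *m states_mx t *m member_diag e).
Proof.
apply/matrixP => a j; rewrite !mxE psiS mxE; apply: eq_bigr => c _; congr (_ * _).
rewrite mulmxDl mulmx_suml !mxE summxE; congr (_ + _).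
  by apply: eq_bigr => b _; rewrite !mxE.
rewrite big_mkcond summxE; apply: eq_bigr => e _.
rewrite mul_mx_diag !mxE; case: (e \in _); rewrite ?mulr1 ?mulr0 //.
by apply: eq_bigr => b _; rewrite !mxE.
Qed.

Lemma states_mx_sub t : (states_mx t <= upset_mx t)%MS.
Proof.
elim: t => [|t IH].
  have -> : states_mx 0 = v *m upset_row set0.
    by apply/matrixP => a j; rewrite !mxE big_ord1 !mxE sub0set mulr1 psi0.
  by apply/mulmx_sub/upset_row_sub; rewrite cards0.
rewrite states_mxS; apply/mulmx_sub/addmx_sub.
  exact/mulmx_sub/(submx_trans IH)/upset_mx_sub.
apply/summx_sub => e _; rewrite -mulmxA; apply: mulmx_sub.
exact/(submx_trans _ (upset_mx_mul_member t e))/submxMr.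
Qed.

Lemma rank_states_mx t : (\rank (states_mx t) <= #|small_sets X t|)%N.
Proof. exact: leq_trans (mxrankS (states_mx_sub t)) (rank_leq_row _). Qed.

End QueryStateRank.

Arguments states_mx {F X D} psi t.
Arguments rank_states_mx {F X D O Del U v psi}.

Section EdgeMetric.
Variables (n m : nat).
Local Notation X := ('I_m * 'I_m)%type.

Definition left_side (i : 'I_n) : bool := (i < m)%N.

Definition is_edge (e : X) (i j : 'I_n) : bool :=
  (e.1 == i :> nat) && (m + e.2 == j)%N || (e.1 == j :> nat) && (m + e.2 == i)%N.

Definition has_edge (B : {set X}) (i j : 'I_n) : bool := [exists e in B, is_edge e i j].

Definition edge_metric (B : {set X}) (i j : 'I_n) : R :=
  if i == j then 0 else if has_edge B i j then 3%:R
  else if left_side i == left_side j then 2%:R else 1.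

Lemma is_edge_sym e i j : is_edge e i j = is_edge e j i.
Proof. by rewrite /is_edge orbC. Qed.

Lemma is_edge_cross {e i j} : is_edge e i j -> left_side i != left_side j.
Proof.
rewrite /left_side => /orP[] /andP[/eqP <- /eqP <-]; have := ltn_ord e.1; lia.
Qed.

Lemma is_edge_neq {e i j} : is_edge e i j -> i != j.
Proof. by move/is_edge_cross; apply: contraNneq => ->. Qed.

Lemma is_edge_inj {e e' i j} : is_edge e i j -> is_edge e' i j -> e = e'.
Proof.
case: e e' => [a b] [a' b']; have := ltn_ord a; have := ltn_ord a'.
by rewrite /is_edge /= => ? ? /orP[]/andP[/eqP ? /eqP ?] /orP[]/andP[/eqP ? /eqP ?];
  try lia; congr pair; apply: val_inj => /=; lia.
Qed.

Lemma has_edge_sym B i j : has_edge B i j = has_edge B j i.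
Proof. by apply: eq_existsb => e; rewrite is_edge_sym. Qed.

Lemma has_edge_cross {B i j} : has_edge B i j -> left_side i != left_side j.
Proof. by case/existsP=> e /andP[_ /is_edge_cross]. Qed.

Lemma has_edge_refl B i : has_edge B i i = false.
Proof. by case E: has_edge => //; move: (has_edge_cross E); rewrite eqxx. Qed.

Lemma has_edge0 i j : has_edge set0 i j = false.
Proof. by apply/existsP => -[e]; rewrite inE. Qed.

Lemma sum_is_edge (V : nzSemiRingType) (B : {set X}) i j :
  \sum_(e in B) (is_edge e i j)%:R = (has_edge B i j)%:R :> V.
Proof.
have [/existsP[e0 /andP[e0B e0ij]]|noedge] := boolP (has_edge B i j).
  rewrite (bigD1 e0) //= e0ij big1 ?addr0 // => e /andP[_ ne].
  by rewrite (_ : is_edge e i j = false) //; apply: contraNF ne => /is_edge_inj/(_ e0ij)->.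
rewrite big1 // => e eB; rewrite (_ : is_edge e i j = false) //.
by apply: contraNF noedge => eij; apply/existsP; exists e; rewrite eB eij.
Qed.

Section FixedEdgeSet.
Variable B : {set X}.
Local Notation d := (edge_metric B).

Lemma edge_metric_ge1 {i j} : i != j -> 1 <= d i j.
Proof. by rewrite /edge_metric => /negPf ->; do 2?case: ifP => _; rewrite ?ler1n. Qed.

Lemma edge_metric_le3 i j : d i j <= 3%:R.
Proof. by rewrite /edge_metric; do 3?case: ifP => _; rewrite ?ler_nat ?ler1n. Qed.

Lemma edge_metric_same_side {i j} :
  i != j -> left_side i = left_side j -> d i j = 2%:R.
Proof.
move=> /negPf neq_ij same_ij; rewrite /edge_metric neq_ij same_ij eqxx.
by case: ifP => // /has_edge_cross; rewrite same_ij eqxx.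
Qed.

Lemma edge_metric_gt2_cross {i j} : 2%:R < d i j -> left_side i != left_side j.
Proof.
rewrite /edge_metric; case: eqP => _; first by rewrite ltNge ler0n.
case: ifP => [/has_edge_cross cross _ //|_].
by case: eqP => [_|/eqP cross _ //]; rewrite ltxx.
Qed.

Lemma edge_metric_triangle i j k : d i k <= d i j + d j k.
Proof.
have d_ge0 a b : 0 <= d a b by rewrite /edge_metric; do 3?case: ifP => _.
have [<-|neq_ik] := eqVneq i k; first by rewrite {1}/edge_metric eqxx addr_ge0.
have [<-|neq_ij] := eqVneq i j; first by rewrite {2}/edge_metric eqxx add0r.
have [<-|neq_jk] := eqVneq j k; first by rewrite [d j j]/edge_metric eqxx addr0.
have ge1_ij := edge_metric_ge1 neq_ij; have ge1_jk := edge_metric_ge1 neq_jk.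
have [/edge_metric_gt2_cross cross_ik|] := ltrP 2%:R (d i k); last by lra.
have le3_ik := edge_metric_le3 i k.
have [same_ij|cross_ij] := eqVneq (left_side i) (left_side j).
  by rewrite (edge_metric_same_side neq_ij same_ij); lra.
have same_jk : left_side j = left_side k.
  by move: cross_ik cross_ij; case: (left_side i); case: (left_side j); case: (left_side k).
by rewrite (edge_metric_same_side neq_jk same_jk); lra.
Qed.

Lemma edge_metric_is_metric : is_metric d.
Proof.
split=> [i j|i j|i j|]; last exact: edge_metric_triangle.
- by rewrite /edge_metric; do 3?case: ifP => _.
- split=> [|->]; last by rewrite /edge_metric eqxx.
  by apply: contra_eq => /edge_metric_ge1 ge1; rewrite lt0r_neq0 // (lt_le_trans ltr01).
- by rewrite /edge_metric has_edge_sym (eq_sym j) (eq_sym (left_side j)).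
Qed.

End FixedEdgeSet.

Hypothesis le_2m_n : (m + m <= n)%N.

Definition left_end (e : X) : 'I_n := widen_ord (leq_trans (leq_addr m m) le_2m_n) e.1.

Fact right_end_subproof (e : X) : (m + e.2 < n)%N.
Proof. by apply: leq_trans le_2m_n; rewrite ltn_add2l. Qed.

Definition right_end (e : X) : 'I_n := Ordinal (right_end_subproof e).

Lemma is_edge_ends e : is_edge e (left_end e) (right_end e).
Proof. by rewrite /is_edge /= !eqxx. Qed.

Lemma has_edge_ends B e : has_edge B (left_end e) (right_end e) = (e \in B).
Proof.
apply/existsP/idP => [[f /andP[fB f_edge]]|eB]; last by exists e; rewrite eB is_edge_ends.
by rewrite -(is_edge_inj f_edge (is_edge_ends e)).
Qed.

Lemma edge_metric_ends B e :
  edge_metric B (left_end e) (right_end e) = if e \in B then 3%:R else 1.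
Proof.
have cross := is_edge_cross (is_edge_ends e).
by rewrite /edge_metric (negPf (is_edge_neq (is_edge_ends e))) has_edge_ends (negPf cross).
Qed.

Lemma estimates_edge_metric_sub {alpha} {A : 'M[R]_n} {B B'} : alpha < 3%:R ->
  estimates alpha (edge_metric B) A -> estimates alpha (edge_metric B') A ->
  B \subset B'.
Proof.
move=> lt_alpha3 /forallP estB /forallP estB'; apply/subsetP => e eB; apply: contraT => eNB'.
have /forallP/(_ (right_end e))/andP[ge3 _] := estB (left_end e).
have /forallP/(_ (right_end e))/andP[_ le_alpha] := estB' (left_end e).
move: ge3 le_alpha; rewrite !edge_metric_ends eB (negPf eNB') mulr1 => ge3 le_alpha.
by move: lt_alpha3; rewrite ltNge (le_trans ge3 le_alpha).
Qed.

Lemma estimates_edge_metric_inj {alpha} {A : 'M[R]_n} {B B'} : alpha < 3%:R ->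
  estimates alpha (edge_metric B) A -> estimates alpha (edge_metric B') A ->
  B = B'.
Proof.
move=> lt_alpha3 estB estB'; apply/eqP; rewrite eqEsubset.
by rewrite (estimates_edge_metric_sub lt_alpha3 estB estB')
           (estimates_edge_metric_sub lt_alpha3 estB' estB).
Qed.

End EdgeMetric.

Arguments is_edge {n m}.
Arguments has_edge {n m}.
Arguments edge_metric {n m}.
Arguments estimates_edge_metric_inj {n m} le_2m_n {alpha A B B'}.

Section QueryAlgorithm.
Variables (n K : nat) (W : finType).
Local Notation D := (qdim n K W).

Definition sqnorm (v : 'cV[Cx]_D) : Cx := \sum_s `|v s 0| ^+ 2.

Lemma sqnorm_unitary_mul (M : 'M[Cx]_D) v : M \is unitarymx -> sqnorm (M *m v) = sqnorm v.
Proof.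
move=> /unitarymxP/mulmx1C M_unitary.
have sqnormE u : sqnorm u = (u ^t* *m u) 0 0.
  by rewrite mxE; apply: eq_bigr => s _; rewrite !mxE normCK mulrC.
by rewrite !sqnormE trmx_mul map_mxM mulmxA -(mulmxA _ _ M) M_unitary mulmx1.
Qed.

Lemma oracle_shift_inj x : injective (@oracle_shift n K W x).
Proof.
apply: (can_inj (g := oracle_shift (fun i j => - x i j))) => -[[[i j] a] w] /=.
by rewrite addrK.
Qed.

Lemma oracle_mx_unitary (x : 'I_n -> 'I_n -> 'I_K.+1) : oracle_mx W x \is unitarymx.
Proof.
apply/unitarymxP/mulmx1C/matrixP => b b'; rewrite !mxE.
rewrite (bigD1 (enum_rank (oracle_shift x (enum_val b)))) //= big1 => [|c].
  rewrite !mxE enum_rankK eqxx conjC_nat mul1r addr0.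
  by rewrite (inj_eq (@oracle_shift_inj x)) (inj_eq enum_val_inj) eq_sym.
apply: contraNeq; rewrite !mxE.
case E: (_ == oracle_shift x _); last by rewrite conjC0 mul0r eqxx.
by rewrite -(eqP E) enum_valK eqxx.
Qed.

Lemma sqnorm_basis_vec s : sqnorm (@basis_vec n K W s) = 1.
Proof.
rewrite /sqnorm (bigD1 (enum_rank s)) //= big1 => [|a].
  by rewrite !mxE enum_rankK eqxx normr1 expr1n addr0.
apply: contraNeq; rewrite !mxE.
case E: (_ == s); last by rewrite normr0 expr0n eqxx.
by rewrite -(eqP E) enum_valK eqxx.
Qed.

Lemma sqnorm_qstate T (Q : qalg n K W T) x t : sqnorm (qstate Q x t) = 1.
Proof.
elim: t => [|t IH] /=; first by rewrite sqnorm_unitary_mul ?sqnorm_basis_vec ?qa_unitary.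
by rewrite !sqnorm_unitary_mul ?qa_unitary ?oracle_mx_unitary.
Qed.

Lemma final_state_sqnorm T (Q : qalg n K W T) x : \sum_s `|final_state Q x s 0| ^+ 2 = 1.
Proof. exact: sqnorm_qstate. Qed.

Lemma success_probE T (Q : qalg n K W T) alpha val x :
  success_prob Q alpha val x =
  \sum_(a < D | estimates alpha (fun i j => val (x i j)) (qa_out Q (enum_val a)))
     `|final_state Q x a 0| ^+ 2.
Proof.
rewrite /success_prob (reindex (@enum_val (qspace n K W) predT)) /=.
  by apply: eq_bigr => a _; rewrite enum_valK.
exact/onW_bij/enum_val_bij.
Qed.

End QueryAlgorithm.

Section HardInstances.
Variables (n m K : nat) (W : finType) (T : nat) (Q : qalg n K W T).
Hypothesis le_2m_n : (m + m <= n)%N.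
Variables (val : 'I_K.+1 -> R) (v0 v1 v2 v3 : 'I_K.+1).
Hypotheses (val0 : val v0 = 0) (val1 : val v1 = 1).
Hypotheses (val2 : val v2 = 2%:R) (val3 : val v3 = 3%:R).
Local Notation X := ('I_m * 'I_m)%type.
Local Notation D := (qdim n K W).

Definition edge_answers (B : {set X}) (i j : 'I_n) : 'I_K.+1 :=
  if has_edge B i j then v3 else if i == j then v0
  else if (i < m)%N == (j < m)%N then v2 else v1.

Lemma edge_answersE (B : {set X}) i j :
  edge_answers B i j = if has_edge B i j then v3 else edge_answers set0 i j.
Proof. by rewrite /edge_answers has_edge0. Qed.

Lemma val_edge_answers (B : {set X}) i j : val (edge_answers B i j) = edge_metric B i j.
Proof.
rewrite /edge_answers /edge_metric; have [->|_] := eqVneq i j; first by rewrite has_edge_refl.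
by case: has_edge => //; case: eqP.
Qed.

Lemma estimates_edge_answers alpha (B : {set X}) (A : 'M[R]_n) :
  estimates alpha (fun i j => val (edge_answers B i j)) A = estimates alpha (edge_metric B) A.
Proof. by apply: eq_forallb => i; apply: eq_forallb => j; rewrite val_edge_answers. Qed.

Lemma metric_edge_answers (B : {set X}) : is_metric (fun i j => val (edge_answers B i j)).
Proof.
case: (edge_metric_is_metric n m B) => ge0 eq0 sym tri.
by split=> [i j|i j|i j|i j k]; rewrite ?val_edge_answers.
Qed.

(* The oracle of d_B differs from that of d_0 only on the queries forming an
   edge of B, where it answers 3: it is affine in the indicator of B. *)
Definition edge_oracle_delta (e : X) : 'M[Cx]_D :=
  \matrix_(c, b) ((is_edge e (enum_val b).1.1.1 (enum_val b).1.1.2)%:R *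
    (oracle_mx W (fun _ _ => v3) c b - oracle_mx W (edge_answers set0) c b)).

Lemma oracle_mx_edge_answers (B : {set X}) : oracle_mx W (edge_answers B) =
  oracle_mx W (edge_answers set0) + \sum_(e in B) edge_oracle_delta e.
Proof.
apply/matrixP => c b; rewrite mxE [in RHS]mxE summxE.
under eq_bigr do rewrite mxE.
rewrite -big_distrl /= sum_is_edge !mxE.
case: (enum_val b) => [[[i j] a] w] /=; rewrite edge_answersE.
by case: (has_edge B i j); rewrite ?mul1r ?mul0r ?addr0 // addrC subrK.
Qed.

Definition final_states_mx : 'M[Cx]_(#|{set X}|, D) :=
  \matrix_(j, a) final_state Q (edge_answers (enum_val j)) a 0.

Lemma rank_final_states_mx : (\rank final_states_mx <= #|small_sets X T|)%N.
Proof.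
pose psi B t := qstate Q (edge_answers B) t.
have psiS B t : psi B t.+1 = qa_U Q (inord t.+1) *m
    ((oracle_mx W (edge_answers set0) + \sum_(e in B) edge_oracle_delta e) *m psi B t).
  by rewrite /psi /= oracle_mx_edge_answers.
have -> : final_states_mx = (states_mx psi T)^T by apply/matrixP => j a; rewrite !mxE.
have psi0 B : psi B 0 = qa_U Q ord0 *m basis_vec (qa_init Q) by [].
by rewrite mxrank_tr (rank_states_mx (U := fun t => qa_U Q (inord t)) psi0 psiS).
Qed.

Lemma hard_instances_count alpha : alpha < 3%:R ->
  solves_metric_estimation Q alpha val -> (2 * 2 ^ (m * m) <= 3 * #|small_sets X T|)%N.
Proof.
move=> lt_alpha3 solves.
pose P (j : 'I_#|{set X}|) (a : 'I_D) :=
  estimates alpha (fun i k => val (edge_answers (enum_val j) i k)) (qa_out Q (enum_val a)).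
have P_disj j j' a : P j a -> P j' a -> j = j'.
  rewrite /P !estimates_edge_answers => estj estj'.
  exact/enum_val_inj/(estimates_edge_metric_inj le_2m_n lt_alpha3 estj estj').
have row_unit j : \sum_a `|final_states_mx j a| ^+ 2 <= 1.
  by under eq_bigr do rewrite mxE; rewrite final_state_sqnorm.
have succ j : 2%:R / 3%:R <= \sum_(a | P j a) `|final_states_mx j a| ^+ 2.
  under eq_bigr do rewrite mxE.
  by rewrite -success_probE; apply/solves/metric_edge_answers.
have mass := le_trans (ler_sum _ (fun j _ => succ j)) (disjoint_mass_le_rank P_disj row_unit).
have rank_le : (\rank final_states_mx)%:R <= #|small_sets X T|%:R :> Cx.
  by rewrite ler_nat rank_final_states_mx.
move: (le_trans mass rank_le).
rewrite sumr_const card_ord -[X in X <= _]mulr_natr mulrAC ler_pdivrMr ?ltr0n // -!natrM ler_nat.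
by rewrite card_sets card_prod card_ord [(3 * _)%N]mulnC.
Qed.

Lemma query_lower_bound alpha : alpha < 3%:R -> (2 <= m)%N ->
  solves_metric_estimation Q alpha val -> (m * m <= 4 * T)%N.
Proof.
move=> lt_alpha3 ge2_m /(hard_instances_count _ lt_alpha3).
rewrite card_small_sets card_prod card_ord => count.
rewrite leqNgt; apply: contraL count => ltT.
by rewrite -ltnNge three_sum_binomial_lt //; nia.
Qed.

End HardInstances.

Arguments query_lower_bound {n m K W T Q} le_2m_n {val v0 v1 v2 v3} val0 val1 val2 val3 {alpha}.

Theorem mainTheorem5 :
  forall alpha : R, 1 < alpha -> alpha < 3%:R ->
  exists c : R, 0 < c /\
  exists N0 : nat, forall n : nat, (N0 <= n)%N ->
  forall (K : nat) (val : 'I_K.+1 -> R),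
    (forall k : nat, (k <= 3)%N -> exists v, val v = k%:R) ->
  forall (W : finType) (T : nat) (Q : qalg n K W T),
    solves_metric_estimation Q alpha val ->
    c * (n%:R) ^+ 2 <= T%:R.
Proof.
move=> alpha _ lt_alpha3; exists 36%:R^-1; split; first by rewrite invr_gt0 ltr0n.
exists 4%N => n ge4_n K val val_small W T Q solves.
have [v0 val0] := val_small 0%N isT; have [v1 val1] := val_small 1%N isT.
have [v2 val2] := val_small 2%N isT; have [v3 val3] := val_small 3%N isT.
have n_half := odd_double_half n; have le1_odd : (odd n <= 1)%N by case: odd.
have le_2m_n : (n./2 + n./2 <= n)%N by lia.
have ge2_m : (2 <= n./2)%N by rewrite -[2%N]/(4./2) half_leq.
have le_m2_T := query_lower_bound le_2m_n val0 val1 val2 val3 lt_alpha3 ge2_m solves.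
rewrite mulrC ler_pdivrMr ?ltr0n // -natrX -natrM ler_nat; nia.
Qed.
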